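(* Let $\pi$ be a permutation of a finite set $F$. Suppose $\mathcal{C}\subset 2^F$ and $G\subset F$ satisfy: (1) $\pi(E)=E$ for every $E\in\mathcal{C}$; (2) if $E_1,E_2\in\mathcal{C}$, then $E_1\cup E_2\in\mathcal{C}$ and $E_1\setminus E_2\in\mathcal{C}$; (3) $G\neq\emptyset$ and $\pi(G)=G$; (4) if $E\subset G$ and $\pi(E)=E$, then $E\in\mathcal{C}$. Then $$\sum_{E\in\mathcal{C}\setminus\{\emptyset\}}(-1)^{|E|+1}\operatorname{sgn}(\pi|_E)=1.$$
   Context: For $E$ with $\pi(E)=E$, $\pi|_E$ is a permutation of $E$ and $\operatorname{sgn}(\pi|_E)$ denotes its sign. *)

From mathcomp Require Import all_boot all_order all_algebra all_fingroup.
Set Implicit Arguments. Unset Strict Implicit. Unset Printing Implicit Defensive.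
Import GRing.Theory.
Local Open Scope ring_scope.

(* The map x |-> pi x on the subtype E = {x | x \in E}; when pi(E) = E this
   is the restriction pi|_E (the default "x" is never used in that case). *)
Definition restr_fun (F : finType) (pi : {perm F}) (E : {set F})
  : {x : F | x \in E} -> {x : F | x \in E} :=
  fun x => insubd x (pi (val x)).

(* sgn(pi|_E) in int, as the sign of the permutation of the finite type E;
   (defaults to 1 if pi does not restrict to a permutation of E, a case
   never used in the theorem since pi(E) = E there). *)
Definition sgn_restr (F : finType) (pi : {perm F}) (E : {set F}) : int :=
  match @injectiveP _ _ (@restr_fun F pi E) with
  | ReflectT h => (-1) ^+ odd_perm (perm h)
  | ReflectF _ => 1
  end.

From mathcomp Require Import all_boot all_order all_algebra all_fingroup.
Import GRing.Theory.
Local Open Scope ring_scope.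

Set Implicit Arguments.

(* sgn(pi|_E) = (-1)^(|E| + c(E)), where c(E) counts the cycles of pi inside
   the invariant set E, so each summand equals -(-1)^c(E).  Fix g in G and its
   cycle O; toggling O (E |-> E :|: O or E :\: O) is an involution of C that
   changes c(E) by one, so the sum of (-1)^c(E) over C vanishes.  Removing the
   contribution -1 of the empty set leaves 1. *)

Section Cycles.
Variables (F : finType) (pi : {perm F}).
Implicit Types (E : {set F}) (x : F).

Definition ncycles E := #|[set porbit pi x | x in E]|.

Lemma ncycles0 : ncycles set0 = 0%N.
Proof. by rewrite /ncycles imset0 cards0. Qed.

Lemma perm_mem_invariant E x : pi @: E = E -> x \in E -> pi x \in E.
Proof. by move=> piE xE; rewrite -piE imset_f. Qed.

Lemma porbit_sub_invariant E x : pi @: E = E -> x \in E -> porbit pi x \subset E.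
Proof.
move=> piE xE; apply/subsetP=> _ /porbitP[i ->].
elim: i => [|i IHi]; first by rewrite expg0 perm1.
by rewrite expgSr permM perm_mem_invariant.
Qed.

Lemma porbit_invariant x : pi @: porbit pi x = porbit pi x.
Proof.
apply/eqP; rewrite eqEcard card_imset ?leqnn ?andbT; last exact: perm_inj.
by apply/subsetP=> _ /imsetP[_ /porbitP[i ->] ->]; rewrite -permM -expgSr mem_porbit.
Qed.

Lemma ncyclesU_porbit E x : pi @: E = E -> x \notin E ->
  ncycles (E :|: porbit pi x) = (ncycles E).+1.
Proof.
move=> piE xE; rewrite /ncycles imsetU.
have -> : [set porbit pi y | y in porbit pi x] = [set porbit pi x].
  apply/setP=> A; rewrite inE; apply/imsetP/eqP => [[y yx ->] | ->].
    by apply/eqP; rewrite eq_porbit_mem.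
  by exists x; rewrite ?porbit_id.
rewrite setUC cardsU1; suff -> : porbit pi x \notin [set porbit pi y | y in E] by [].
apply/imsetP => -[y yE xy].
have : x \in porbit pi y by rewrite -xy porbit_id.
by move/(subsetP (porbit_sub_invariant piE yE)); rewrite (negbTE xE).
Qed.

(* The cycles of pi|_E are the images of the cycles of pi meeting E. *)
Lemma sgn_restrE E : pi @: E = E -> sgn_restr pi E = (-1) ^+ (#|E| + ncycles E).
Proof.
move=> piE.
have restrE (y : {x | x \in E}) : val (@restr_fun F pi E y) = pi (val y).
  by rewrite /restr_fun insubdK // perm_mem_invariant // (valP y).
rewrite /sgn_restr; case: injectiveP => [restr_inj | []]; last first.
  by move=> a b /(congr1 val); rewrite !restrE => /perm_inj /val_inj.
set s := perm restr_inj.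
have sX i y : val ((s ^+ i)%g y) = (pi ^+ i)%g (val y).
  elim: i y => [|i IHi] y; first by rewrite !expg0 !perm1.
  by rewrite !expgSr !permM permE restrE IHi.
have porbit_s y : val @: porbit s y = porbit pi (val y).
  apply/setP=> z; apply/imsetP/porbitP => [[_ /porbitP[i ->] ->] | [i ->]].
    by exists i; rewrite sX.
  by exists ((s ^+ i)%g y); rewrite ?mem_porbit ?sX.
rewrite /odd_perm signr_addb !signr_odd card_sig -exprD /porbits /ncycles.
rewrite -(card_imset _ (imset_inj val_inj)) -imset_comp.
congr (_ ^+ (_ + _))%N; apply: eq_card => A.
apply/imsetP/imsetP => [[y _ ->] | [y yE ->]].
  by exists (val y); rewrite ?(valP y) //= porbit_s.
by exists (Sub y yE); rewrite //= porbit_s.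
Qed.

Lemma sum_sign_ncycles_eq0 (C : {set {set F}}) g :
    (forall E, E \in C -> pi @: E = E) ->
    (forall E1 E2, E1 \in C -> E2 \in C -> (E1 :|: E2) \in C /\ (E1 :\: E2) \in C) ->
    porbit pi g \in C ->
  \sum_(E in C) (-1) ^+ ncycles E = 0 :> int.
Proof.
move=> C_inv C_closed OC; set O := porbit pi g.
have gO : g \in O := porbit_id pi g.
have disjO E : E \in C -> g \notin E -> [disjoint O & E].
  move=> EC gE; rewrite disjoint_subset; apply/subsetP => y yO.
  rewrite inE; apply: contra gE => yE.
  by apply: (subsetP (porbit_sub_invariant (C_inv _ EC) yE)); rewrite porbit_sym.
rewrite (bigID (fun E => g \in E)) /=.
have -> : \sum_(E in C | g \in E) (-1) ^+ ncycles E
        = \sum_(E in C | g \notin E) - (-1) ^+ ncycles E :> int.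
  rewrite (reindex_onto (fun E => E :|: O) (fun E => E :\: O)) /=; last first.
    move=> E /andP[EC gE]; apply/setP=> y; rewrite !inE.
    case: (boolP (y \in O)) => [yO | _]; rewrite ?orbF //=.
    by rewrite (subsetP (porbit_sub_invariant (C_inv _ EC) gE)).
  rewrite (eq_bigl (fun E => (E \in C) && (g \notin E))) => [|E].
    apply: eq_bigr => E /andP[EC gE].
    by rewrite ncyclesU_porbit ?C_inv // exprS mulN1r.
  apply/andP/andP => [[/andP[EOC _] /eqP <-] | [EC gE]].
    by rewrite !inE gO; case: (C_closed _ _ EOC OC).
  rewrite !inE gO orbT setDUl setDv setU0 (proj1 (C_closed _ _ EC OC)).
  by split=> //; apply/eqP/setDidPl; rewrite disjoint_sym disjO.
by rewrite sumrN addNr.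
Qed.

End Cycles.

Theorem lemma2p3 (F : finType) (pi : {perm F}) (C : {set {set F}})
    (G : {set F})
    (h1 : forall E, E \in C -> pi @: E = E)
    (h2 : forall E1 E2, E1 \in C -> E2 \in C ->
            (E1 :|: E2) \in C /\ (E1 :\: E2) \in C)
    (h3 : G != set0 /\ pi @: G = G)
    (h4 : forall E : {set F}, E \subset G -> pi @: E = E -> E \in C) :
  \sum_(E in C :\ (set0 : {set F})) (-1) ^+ (#|E| + 1)%N * sgn_restr pi E = 1 :> int.
Proof.
case: h3 => /set0Pn[g gG] piG.
have GC : G \in C by apply: h4.
have C0 : set0 \in C by rewrite -(setDv G); case: (h2 _ _ GC GC).
have OC : porbit pi g \in C.
  by apply: h4; [exact: porbit_sub_invariant | exact: porbit_invariant].
have summandE E : E \in C ->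
    (-1) ^+ (#|E| + 1)%N * sgn_restr pi E = - (-1) ^+ ncycles pi E :> int.
  move=> EC; rewrite sgn_restrE ?h1 // -exprD -signr_odd addnACA addnn.
  by rewrite oddD odd_double signr_odd exprD expr1 mulN1r.
rewrite (eq_bigr (fun E => - (-1) ^+ ncycles pi E)); last first.
  by move=> E; rewrite !inE => /andP[_ /summandE].
have := sum_sign_ncycles_eq0 h1 h2 OC.
by rewrite (big_setD1 _ C0) /= ncycles0 sumrN => /eqP; rewrite addr_eq0 => /eqP <-.
Qed.
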